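(* Let $n\ge1$ and $\pi\in S_n$, and set $w=\hat\pi$. Then $\pi\in\mathcal C_n(321)$ if and only if $\hat\pi_1=n$ and $$N_{\underline{32}\,\underline{41}}(w)+N_{\underline{14}\,\underline{23}}(w)+N_{\underline{41}\,\underline{32}}(w)+M(\pi)=0,$$ where $M(\pi)=\#\{(i,k): i+2\le k\le n,\ \hat\pi_k<\hat\pi_i<\hat\pi_{i+1}<\pi(\hat\pi_k)\}$. In particular, $\pi\in\mathcal C_n(321)$ iff $\hat\pi_1=n$, $\hat\pi$ avoids $\underline{32}\,\underline{41}$, $\underline{14}\,\underline{23}$, $\underline{41}\,\underline{32}$, and $M(\pi)=0$.
   Context: Permutations of $[n]$ are written in one-line notation $\pi=\pi_1\cdots\pi_n$. A permutation contains $321$ if there are $i<j<k$ with $\pi_i>\pi_j>\pi_k$. $\mathcal C_n$ is the set of cyclic permutations of $[n]$ (a single $n$-cycle), and $\mathcal C_n(321)$ those avoiding $321$. The standard cycle notation of $\pi$ writes each cycle with its largest element first, as $(m,\pi(m),\pi^2(m),\dots)$, and lists the cycles in increasing order of their largest elements. $\theta:S_n\to S_n$ sends $\pi$ to the permutation whose one-line notation is the standard cycle notation of $\pi$ with parentheses erased; $\hat\pi=\theta(\pi)$. For a sequence $w=w_1\cdots w_N$ of distinct integers, with pairs $(i,j)$ ranging over $i+2\le j\le N-1$: $N_{\underline{32}\,\underline{41}}(w)=\#\{(i,j): w_{j+1}<w_{i+1}<w_i<w_j\}$; $N_{\underline{14}\,\underline{23}}(w)=\#\{(i,j): w_i<w_j<w_{j+1}<w_{i+1}\}$;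 $N_{\underline{41}\,\underline{32}}(w)=\#\{(i,j): w_{i+1}<w_{j+1}<w_j<w_i\}$. $w$ avoids such a pattern if its count is $0$. *)

From mathcomp Require Import all_boot all_order all_fingroup.
Set Implicit Arguments. Unset Strict Implicit. Unset Printing Implicit Defensive.

(* Permutations of [n] are modelled as {perm 'I_n}; the element k of [n]
   corresponds to the ordinal k-1.  Positions are 1-based as in the paper. *)

Definition is_cyclic n (p : {perm 'I_n}) : bool := #|porbits p| == 1.

Definition contains321 n (p : {perm 'I_n}) : bool :=
  [exists i : 'I_n, exists j : 'I_n, exists k : 'I_n,
    [&& i < j, j < k, p j < p i & p k < p j]].

Definition cycle_max n (p : {perm 'I_n}) (m : 'I_n) : bool :=
  [forall x in porbit p m, x <= m].

(* theta p: standard cycle notation with parentheses erased, as a sequence of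
   elements of 'I_n: cycles (m, p m, p^2 m, ...) with m the cycle maximum,
   listed in increasing order of m. *)
Definition theta n (p : {perm 'I_n}) : seq 'I_n :=
  flatten [seq traject p m #|porbit p m| | m <- enum 'I_n & cycle_max p m].

Definition hatw n (p : {perm 'I_n}) : seq nat := [seq (val x).+1 | x <- theta p].

Definition phatw n (p : {perm 'I_n}) : seq nat := [seq (val (p x)).+1 | x <- theta p].

Definition at1 (w : seq nat) (i : nat) : nat := nth 0 w i.-1.

Definition count_pairs (N : nat) (P : nat -> nat -> bool) : nat :=
  count (fun ij : nat * nat => [&& ij.1 + 2 <= ij.2, ij.2 <= N.-1 & P ij.1 ij.2])
        [seq (i, j) | i <- iota 1 N, j <- iota 1 N].

Definition N32_41 (w : seq nat) : nat :=
  count_pairs (size w) (fun i j =>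
    [&& at1 w j.+1 < at1 w i.+1, at1 w i.+1 < at1 w i & at1 w i < at1 w j]).

Definition N14_23 (w : seq nat) : nat :=
  count_pairs (size w) (fun i j =>
    [&& at1 w i < at1 w j, at1 w j < at1 w j.+1 & at1 w j.+1 < at1 w i.+1]).

Definition N41_32 (w : seq nat) : nat :=
  count_pairs (size w) (fun i j =>
    [&& at1 w i.+1 < at1 w j.+1, at1 w j.+1 < at1 w j & at1 w j < at1 w i]).

Definition Mstat n (p : {perm 'I_n}) : nat :=
  let w := hatw p in let v := phatw p in
  count (fun ik : nat * nat => [&& ik.1 + 2 <= ik.2, ik.2 <= n,
            at1 w ik.2 < at1 w ik.1, at1 w ik.1 < at1 w ik.1.+1
          & at1 w ik.1.+1 < at1 v ik.2])
        [seq (i, k) | i <- iota 1 n, k <- iota 1 n].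

(* A cyclic p in S_n is the single cycle (n, p n, p^2 n, ...), so hat p lists
   that cycle and each letter x of hat p is followed by p x.  Whenever
   p x > p y for x < y, a deficiency at x or an excedance at y forces a 321 by
   counting values, while conversely the middle letter of a 321 of a cyclic p
   is never fixed and yields such a pair.  Reading a pair of letters off
   hat p by which of the two comes first, deficiency pairs are exactly the
   occurrences of 32-41 and 41-32, and excedance pairs those of 14-23 and
   those counted by M.  Finally hat p_1 is the smallest cycle maximum, so
   hat p_1 = n forces p to be cyclic. *)

From mathcomp Require Import all_boot all_fingroup zify.
Set Implicit Arguments. Unset Strict Implicit. Unset Printing Implicit Defensive.

Section Pattern321.
Variables (N : nat) (p : {perm 'I_N}).

Definition excedance_pair (x y : 'I_N) : bool := [&& x < y, y < p y & p y < p x].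
Definition deficiency_pair (x y : 'I_N) : bool := [&& x < y, p y < p x & p x < x].

(* If no z > y has p z < p y, the p y positions z with p z < p y all lie
   below y and differ from x, which is too few since p y > y. *)
Lemma contains321_excedance_pair x y : excedance_pair x y -> contains321 p.
Proof.
case/and3P=> xy ypy pyx.
have [/existsP[z /andP[yz pzy]] | /existsPn noz] :=
  boolP [exists z : 'I_N, (y < z) && (p z < p y)].
  by apply/existsP; exists x; apply/existsP; exists y; apply/existsP; exists z;
    rewrite xy yz pyx pzy.
pose A := [set z : 'I_N | z < y].
pose B := [set z | p z < p y].
have cardB : #|B| = #|[set z : 'I_N | z < p y]|.
  rewrite -[RHS](card_preimset _ (@perm_inj _ p)).
  by apply: eq_card => z; rewrite !inE.
have AyB : #|A|.+1 <= #|B|.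
  have := cardsU1 y A; rewrite inE ltnn add1n => <-.
  rewrite cardB subset_leq_card //.
  apply/subsetP=> z; rewrite !inE => /predU1P[-> // | zy].
  exact: ltn_trans ypy.
have BAx : B \subset A :\ x.
  apply/subsetP=> z; rewrite !inE => pzy.
  have zy : z <= y by move: (noz z); rewrite pzy andbT ltnNge negbK.
  have neq_z u : p y <= p u -> z != u.
    by move=> pyu; apply/eqP=> zu; move: pzy; rewrite zu ltnNge pyu.
  by rewrite (neq_z x (ltnW pyx)) ltn_neqAle zy andbT (neq_z y).
have := leq_trans AyB (subset_leq_card BAx).
by rewrite (cardsD1 x A) inE xy add1n ltnNge leqnSn.
Qed.

End Pattern321.

Lemma contains321_inv N (p : {perm 'I_N}) : contains321 p^-1 = contains321 p.
Proof.
suff imp (q : {perm 'I_N}) : contains321 q -> contains321 q^-1.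
  by apply/idP/idP => [/imp | /imp //]; rewrite invgK.
rewrite /contains321 => /existsP[i /existsP[j /existsP[k /and4P[ij jk qji qkj]]]].
apply/existsP; exists (q k); apply/existsP; exists (q j); apply/existsP; exists (q i).
by rewrite qkj qji !permK jk ij.
Qed.

Lemma contains321_deficiency_pair N (p : {perm 'I_N}) x y :
  deficiency_pair p x y -> contains321 p.
Proof.
case/and3P=> xy pyx pxx; rewrite -contains321_inv.
by apply: (@contains321_excedance_pair _ _ (p y) (p x));
  rewrite /excedance_pair !permK pyx pxx xy.
Qed.

Section Cyclic.
Variables (N : nat) (p : {perm 'I_N}).

Lemma mem_porbit_cyclic x y : is_cyclic p -> x \in porbit p y.
Proof.
case/cards1P=> A porbitsE.
have porbitE z : porbit p z = A.
  by apply/eqP; rewrite -in_set1 -porbitsE; apply: imset_f.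
by rewrite -eq_porbit_mem !porbitE.
Qed.

Lemma cyclic_of_porbit y : (forall x, x \in porbit p y) -> is_cyclic p.
Proof.
move=> Hy; apply/cards1P; exists (porbit p y); apply/setP=> A; rewrite inE.
apply/imsetP/eqP => [[x _ ->] | ->]; last by exists y.
by apply/eqP; rewrite eq_porbit_mem.
Qed.

Lemma cyclic_fixpoint x y : is_cyclic p -> p x = x -> y = x.
Proof.
by move=> /(mem_porbit_cyclic y x) /porbitP[i ->] /permX_fix->.
Qed.

(* The middle letter y of a 321 is an excedance, paired with the first letter,
   or a deficiency, paired with the last one. *)
Lemma contains321_cyclic_pair : is_cyclic p -> contains321 p ->
  exists x y, excedance_pair p x y || deficiency_pair p x y.
Proof.
move=> cyc /existsP[x /existsP[y /existsP[z /and4P[xy yz pyx pzy]]]].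
case: (ltngtP (p y) y) => [pyy | ypy | /val_inj pyy].
- by exists y, z; rewrite /deficiency_pair yz pzy pyy orbT.
- by exists x, y; rewrite /excedance_pair xy ypy pyx.
- by move: xy; rewrite (cyclic_fixpoint x cyc pyy) ltnn.
Qed.

Lemma avoid321_cyclicE : is_cyclic p ->
  ~~ contains321 p <->
  (forall x y, ~~ excedance_pair p x y) /\ (forall x y, ~~ deficiency_pair p x y).
Proof.
move=> cyc; split.
  move=> avoid; split=> x y; apply: contra avoid.
    exact: contains321_excedance_pair.
  exact: contains321_deficiency_pair.
case=> noexc nodef; apply/negP => /(contains321_cyclic_pair cyc)[x [y]].
by rewrite (negbTE (noexc x y)) (negbTE (nodef x y)).
Qed.

End Cyclic.

Lemma exists_cycle_max N (p : {perm 'I_N}) x :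
  exists2 m, cycle_max p m & x \in porbit p m.
Proof.
have [m xm maxm] := @arg_maxnP _ x (mem (porbit p x)) val (porbit_id p x).
have porbit_m : porbit p m = porbit p x by apply/eqP; rewrite eq_porbit_mem.
exists m; last by rewrite porbit_sym.
by apply/forallP=> z; apply/implyP; rewrite porbit_m => /maxm.
Qed.

Lemma count_window_eq0 N K (P : nat -> nat -> bool) : K <= N ->
  count (fun ij : nat * nat => [&& ij.1 + 2 <= ij.2, ij.2 <= K & P ij.1 ij.2])
        [seq (i, j) | i <- iota 1 N, j <- iota 1 N] = 0 <->
  (forall i j, i.+1 < j -> j < K -> ~~ P i.+1 j.+1).
Proof.
move=> le_KN; split=> [/eqP | noP]; last apply/eqP; rewrite -leqn0 leqNgt -has_count.
  move=> /hasPn noP i j ij jK.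
  apply: contraTN (noP (i.+1, j.+1) _) => [Pij | ]; first by rewrite /= Pij; lia.
  by apply: allpairs_f; rewrite mem_iota; lia.
apply/hasPn => z /allpairsP[[[|i] [|j]] [/= ii jj ->]]; rewrite ?mem_iota // in ii jj.
apply/and3P => -[/= ij jK]; apply/negP/noP; lia.
Qed.

Lemma count_pairs_eq0 N (P : nat -> nat -> bool) :
  count_pairs N P = 0 <-> (forall i j, i.+1 < j -> j < N.-1 -> ~~ P i.+1 j.+1).
Proof. exact: count_window_eq0 (leq_pred N). Qed.

Section Hat.
Variables (n : nat) (p : {perm 'I_n.+1}).

Lemma cycle_max_ord_max : cycle_max p ord_max.
Proof. by apply/forallP=> z; apply/implyP=> _; exact: leq_ord. Qed.

Lemma sorted_cycle_max : sorted (fun a b : 'I_n.+1 => a < b)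
  [seq m <- enum 'I_n.+1 | cycle_max p m].
Proof.
apply: sorted_filter; first by move=> b a c; exact: ltn_trans.
by have := iota_ltn_sorted 0 n.+1; rewrite -val_enum_ord sorted_map.
Qed.

(* The first letter of hat p is the smallest cycle maximum m0; if it is n,
   every cycle has maximum n. *)
Lemma head_hatw_cyclic : at1 (hatw p) 1 = n.+1 -> is_cyclic p.
Proof.
rewrite /at1 /hatw /theta.
have : ord_max \in [seq m <- enum 'I_n.+1 | cycle_max p m].
  by rewrite mem_filter cycle_max_ord_max mem_enum.
have := sorted_cycle_max.
case Et: [seq m <- _ | _] => [// | m0 t] /= srt _.
have [k ->] : exists k, #|porbit p m0| = k.+1.
  by case: #|_| (card_porbit_neq0 p m0) => // k _; exists k.
move=> /= [m0n]; apply: (@cyclic_of_porbit _ _ m0) => x.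
have [m maxm xm] := exists_cycle_max p x.
suff <- : m = m0 by [].
have : m \in m0 :: t by rewrite -Et mem_filter maxm mem_enum.
case/predU1P=> // mt.
have := allP (order_path_min (fun b a c : 'I_n.+1 => @ltn_trans b a c) srt) m mt.
by rewrite m0n ltnNge leq_ord.
Qed.

Section CyclicHat.
Hypothesis cyc : is_cyclic p.
Local Notation e i := (iter i p ord_max).

Lemma card_porbit_cyclic x : #|porbit p x| = n.+1.
Proof. by rewrite -[RHS]card_ord; apply: eq_card => y; rewrite mem_porbit_cyclic. Qed.

Lemma theta_cyclic : theta p = traject p ord_max n.+1.
Proof.
rewrite /theta (_ : [seq m <- _ | _] = [:: ord_max]) /= ?cats0 ?card_porbit_cyclic //.
rewrite -(@filter_pred1_uniq _ (enum 'I_n.+1) ord_max) ?enum_uniq ?mem_enum //.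
apply: eq_filter => m /=; apply/idP/eqP => [maxm | ->]; last exact: cycle_max_ord_max.
apply/val_inj/eqP; rewrite eqn_leq leq_ord.
by move/forallP/(_ ord_max): maxm; rewrite mem_porbit_cyclic.
Qed.

Lemma size_hatw_cyclic : size (hatw p) = n.+1.
Proof. by rewrite /hatw theta_cyclic size_map size_traject. Qed.

Lemma at1_hatw_cyclic i : i <= n -> at1 (hatw p) i.+1 = (e i).+1.
Proof.
by move=> le_in; rewrite /at1 /hatw theta_cyclic (nth_map ord_max) ?nth_traject ?size_traject.
Qed.

Lemma at1_phatw_cyclic i : i <= n -> at1 (phatw p) i.+1 = (p (e i)).+1.
Proof.
by move=> le_in; rewrite /at1 /phatw theta_cyclic (nth_map ord_max) ?nth_traject ?size_traject.
Qed.

Lemma iter_cyclic_last : p (e n) = ord_max.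
Proof. by have := iter_porbit p ord_max; rewrite card_porbit_cyclic. Qed.

Lemma iter_cyclic_lt_last k : k <= n -> p (e k) < n -> k < n.
Proof.
rewrite leq_eqVlt => /predU1P[-> | //].
by rewrite iter_cyclic_last ltnn.
Qed.

Lemma iter_cyclic_onto x : exists2 i, i <= n & x = e i.
Proof.
have := porbit_traject p ord_max x.
rewrite card_porbit_cyclic mem_porbit_cyclic //.
by move=> /esym/trajectP[i]; exists i.
Qed.

Lemma count_pairs_hatw_eq0 (R : nat -> nat -> nat -> nat -> bool) :
  count_pairs (size (hatw p)) (fun i j =>
    R (at1 (hatw p) i) (at1 (hatw p) i.+1) (at1 (hatw p) j) (at1 (hatw p) j.+1)) = 0 <->
  (forall i j, i.+1 < j -> j < n -> ~~ R (e i).+1 (p (e i)).+1 (e j).+1 (p (e j)).+1).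
Proof.
rewrite count_pairs_eq0 size_hatw_cyclic //.
by split=> noR i j ij jn; have := noR i j ij jn; rewrite !at1_hatw_cyclic //; lia.
Qed.

Lemma Mstat_cyclic_eq0 : Mstat p = 0 <->
  (forall i k, i.+1 < k -> k <= n -> ~~ [&& e k < e i, e i < p (e i) & p (e i) < p (e k)]).
Proof.
rewrite /Mstat /= (@count_window_eq0 n.+1 n.+1 (fun i k =>
  [&& at1 (hatw p) k < at1 (hatw p) i, at1 (hatw p) i < at1 (hatw p) i.+1
    & at1 (hatw p) i.+1 < at1 (phatw p) k])) //.
by split=> noM i k ik kn; have := noM i k ik kn;
  rewrite !at1_hatw_cyclic ?at1_phatw_cyclic ?ltnS //; lia.
Qed.

(* A pair of letters is counted by the first pattern when its smaller letter
   comes first in hat p and by the second one otherwise.  The two letters are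
   never adjacent and the later one is never last, as the inequalities show
   (the successor of the last letter is n). *)
Lemma deficiency_pairs_hatw :
  (forall x y, ~~ deficiency_pair p x y) <-> N32_41 (hatw p) = 0 /\ N41_32 (hatw p) = 0.
Proof.
rewrite /N32_41 (count_pairs_hatw_eq0 (fun a a' b b' => [&& b' < a', a' < a & a < b])).
rewrite /N41_32 (count_pairs_hatw_eq0 (fun a a' b b' => [&& a' < b', b' < b & b < a])).
split=> [nodef | [noN1 noN2] x y].
  split=> i j _ _; rewrite !ltnS.
    by apply: contra (nodef (e i) (e j)) => /and3P[? ? ?]; apply/and3P.
  by apply: contra (nodef (e j) (e i)) => /and3P[? ? ?]; apply/and3P.
have [i le_in ->] := iter_cyclic_onto x; have [j le_jn ->] := iter_cyclic_onto y.
apply/and3P => -[xy pyx pxx].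
case: (ltngtP i j) => [ij | ji | eij]; last by move: xy; rewrite eij ltnn.
- have adj : i.+1 < j.
    by rewrite ltn_neqAle ij andbT; apply/eqP=> ji; move: xy pxx; rewrite -ji /=; lia.
  have jn : j < n by apply: (iter_cyclic_lt_last le_jn); exact: leq_trans pyx (leq_ord _).
  by move: (noN1 i j adj jn); rewrite !ltnS pyx pxx xy.
- have adj : j.+1 < i.
    by rewrite ltn_neqAle ji andbT; apply/eqP=> ij; move: pyx pxx; rewrite -ij /=; lia.
  have iN : i < n by apply: (iter_cyclic_lt_last le_in); exact: leq_trans pxx (leq_ord _).
  by move: (noN2 j i adj iN); rewrite !ltnS pyx pxx xy.
Qed.

(* As above, except that M also admits the later letter in last position. *)
Lemma excedance_pairs_hatw :
  (forall x y, ~~ excedance_pair p x y) <-> N14_23 (hatw p) = 0 /\ Mstat p = 0.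
Proof.
rewrite /N14_23 (count_pairs_hatw_eq0 (fun a a' b b' => [&& a < b, b < b' & b' < a'])).
rewrite Mstat_cyclic_eq0.
split=> [noexc | [noN noM] x y].
  split=> i j _ _; rewrite ?ltnS.
    by apply: contra (noexc (e i) (e j)) => /and3P[? ? ?]; apply/and3P.
  by apply: contra (noexc (e j) (e i)) => /and3P[? ? ?]; apply/and3P.
have [i le_in ->] := iter_cyclic_onto x; have [j le_jn ->] := iter_cyclic_onto y.
apply/and3P => -[xy ypy pyx].
case: (ltngtP i j) => [ij | ji | eij]; last by move: xy; rewrite eij ltnn.
- have adj : i.+1 < j.
    by rewrite ltn_neqAle ij andbT; apply/eqP=> ji; move: ypy pyx; rewrite -ji /=; lia.
  have jn : j < n by apply: (iter_cyclic_lt_last le_jn); exact: leq_trans pyx (leq_ord _).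
  by move: (noN i j adj jn); rewrite !ltnS xy ypy pyx.
- have adj : j.+1 < i.
    by rewrite ltn_neqAle ji andbT; apply/eqP=> ij; move: xy ypy; rewrite -ij /=; lia.
  by move: (noM j i adj le_in); rewrite xy ypy pyx.
Qed.

End CyclicHat.
End Hat.

Lemma avoid321_cyclic_hatw n (p : {perm 'I_n.+1}) :
  (is_cyclic p && ~~ contains321 p) <->
  [/\ at1 (hatw p) 1 = n.+1, N32_41 (hatw p) = 0, N14_23 (hatw p) = 0,
      N41_32 (hatw p) = 0 & Mstat p = 0].
Proof.
split=> [/andP[cyc] | [head N1 N2 N3 M]].
  case/(avoid321_cyclicE cyc) => /(excedance_pairs_hatw cyc)[N2 M].
  by case/(deficiency_pairs_hatw cyc) => N1 N3; rewrite (at1_hatw_cyclic cyc).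
have cyc := head_hatw_cyclic head.
rewrite cyc; apply/(avoid321_cyclicE cyc).
by split; [apply/(excedance_pairs_hatw cyc) | apply/(deficiency_pairs_hatw cyc)].
Qed.

Theorem mainTheorem4 (n : nat) (hn : 1 <= n) (p : {perm 'I_n}) :
  ((is_cyclic p && ~~ contains321 p) <->
     (at1 (hatw p) 1 = n /\
      N32_41 (hatw p) + N14_23 (hatw p) + N41_32 (hatw p) + Mstat p = 0))
  /\
  ((is_cyclic p && ~~ contains321 p) <->
     [/\ at1 (hatw p) 1 = n, N32_41 (hatw p) = 0, N14_23 (hatw p) = 0,
         N41_32 (hatw p) = 0 & Mstat p = 0]).
Proof.
case: n hn p => [// | n] _ p.
rewrite avoid321_cyclic_hatw; split=> //.
split=> [[-> -> -> -> ->] // | [head sum0]].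
by split=> //; lia.
Qed.
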